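(* Let $R$ be a commutative ring with identity. Then $R$ satisfies Property $D$ if and only if the polynomial ring $R[x]$ satisfies Property $D$.
   Context: A ring $A$ satisfies Property $D$ if $A\setminus\mathfrak{N}(A)=\mathrm{reg}(A)$, where $\mathfrak{N}(A)$ is the nilradical and $\mathrm{reg}(A)$ the set of regular elements (non-zero-divisors). *)

From mathcomp Require Import all_boot all_algebra.
Set Implicit Arguments. Unset Strict Implicit. Unset Printing Implicit Defensive.
Import GRing.Theory.
Local Open Scope ring_scope.

Definition nilpotent_elt (A : comNzRingType) (x : A) : Prop :=
  exists n : nat, x ^+ n = 0.

Definition regular_elt (A : comNzRingType) (x : A) : Prop :=
  forall y : A, x * y = 0 -> y = 0.

Definition PropertyD (A : comNzRingType) : Prop :=
  forall x : A, ~ nilpotent_elt x <-> regular_elt x.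

From mathcomp Require Import all_boot all_algebra.
From Stdlib Require Import Classical.
Set Implicit Arguments. Unset Strict Implicit. Unset Printing Implicit Defensive.
Import GRing.Theory.
Local Open Scope ring_scope.

(* A regular element is never nilpotent, and Property D says that every zero
   divisor of R is nilpotent.  If f is a zero divisor of R[x], McCoy's theorem
   yields a single nonzero constant c killing every coefficient of f; so each
   coefficient is a zero divisor of R, hence nilpotent, hence f is nilpotent.
   Conversely, the constant polynomials carry nilpotency and regularity of R
   back from R[x]. *)

Section Elements.
Variable A : comNzRingType.
Implicit Types x y : A.

Lemma regular_not_nilpotent x : regular_elt x -> ~ nilpotent_elt x.
Proof.
move=> xreg [n]; elim: n => [|n IHn]; first by rewrite expr0; exact/eqP/oner_neq0.
by rewrite exprS => /xreg.
Qed.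

Lemma nilpotentD x y :
  nilpotent_elt x -> nilpotent_elt y -> nilpotent_elt (x + y).
Proof.
have exprW (z : A) m k : z ^+ m = 0 -> (m <= k)%N -> z ^+ k = 0.
  by move=> zm0 /subnKC <-; rewrite exprD zm0 mul0r.
move=> [m xm0] [n yn0]; exists (m + n)%N; rewrite exprDn big1 // => i _.
have [le_ni | lt_in] := leqP n i; first by rewrite (exprW _ _ _ yn0 le_ni) mulr0 mul0rn.
have le_m : (m <= m + n - i)%N by rewrite -addnBA ?leq_addr // ltnW.
by rewrite (exprW _ _ _ xm0 le_m) mul0r mul0rn.
Qed.

Lemma PropertyD_zero_divisor_nilpotent x y :
  PropertyD A -> y != 0 -> y * x = 0 -> nilpotent_elt x.
Proof.
move=> D y_neq0 yx0; apply: NNPP => /D /(_ y).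
by rewrite mulrC => /(_ yx0) y0; rewrite y0 eqxx in y_neq0.
Qed.

End Elements.

Section Polynomials.
Variable R : comNzRingType.
Implicit Types (c x : R) (f g : {poly R}).

Lemma nilpotent_poly f : (forall k, nilpotent_elt f`_k) -> nilpotent_elt f.
Proof.
move=> nil_coef; rewrite -[f]coefK poly_def.
apply: (big_ind (@nilpotent_elt _)); [by exists 1%N; rewrite expr1 | exact: nilpotentD |].
move=> i _; have [n fin0] := nil_coef i; exists n.
by rewrite -mul_polyC exprMn -polyC_exp fin0 mul0r.
Qed.

Lemma nilpotent_polyC x : nilpotent_elt x%:P -> nilpotent_elt x.
Proof. by move=> [n]; rewrite -polyC_exp => /eqP; rewrite polyC_eq0 => /eqP; exists n. Qed.

Lemma regular_polyC x : regular_elt x%:P -> regular_elt x.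
Proof.
move=> xreg y xy0; have /xreg/eqP : x%:P * y%:P = 0 by rewrite -polyCM xy0.
by rewrite polyC_eq0 => /eqP.
Qed.

Lemma coefM_lead f g m : (forall p, (m < p)%N -> f`_p *: g = 0) ->
  (f * g)`_(m + (size g).-1) = f`_m * lead_coef g.
Proof.
move=> fg0; rewrite coefM (bigD1 (Ordinal (leq_addr _ m.+1))) //= addKn.
rewrite big1 ?addr0 // => -[j lt_j] /= ne_jm.
have [lt_jm | lt_mj | eq_jm] := ltngtP j m; last by rewrite -val_eqE /= eq_jm eqxx in ne_jm.
  rewrite [g`_ _]nth_default ?mulr0 //; apply: leq_trans (leqSpred _) _.
  by rewrite -addnBAC ?(ltnW lt_jm) // addnC -addn1 leq_add2l subn_gt0.
by have /(congr1 (coefp (m + (size g).-1 - j)%N)) := fg0 _ lt_mj; rewrite /= coefZ coef0.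
Qed.

Lemma size_scale_lt c g :
  g != 0 -> c * lead_coef g = 0 -> (size (c *: g) < size g)%N.
Proof.
move=> g_neq0 c_lead0; rewrite ltn_neqAle size_scale_leq andbT.
apply/eqP => eq_size.
have : c *: g != 0 by rewrite -size_poly_eq0 eq_size size_poly_eq0.
by rewrite -lead_coef_eq0 /lead_coef coefZ eq_size c_lead0 eqxx.
Qed.

(* Induction on the size of the annihilator: either every [f`_k *: g] vanishes
   and [lead_coef g] works, or the last nonvanishing [f`_m *: g] is a smaller
   annihilator of [f]. *)
Theorem mccoy f g :
  g != 0 -> f * g = 0 -> exists2 c, c != 0 & forall k, c * f`_k = 0.
Proof.
have [n] := ubnP (size g); elim: n g => // n IHn g /ltnSE le_gn g_neq0 fg0.
have [[k fkg_neq0] | fg_coef0] := classic (exists k, f`_k *: g != 0); last first.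
  exists (lead_coef g); first by rewrite lead_coef_eq0.
  move=> k; have fkg0 : f`_k *: g = 0.
    by apply/eqP/negPn/negP => fkg_neq0; apply: fg_coef0; exists k.
  by rewrite mulrC /lead_coef -coefZ fkg0 coef0.
have ub_f i : f`_i *: g != 0 -> (i <= size f)%N.
  move=> fig_neq0; rewrite leqNgt; apply: contra fig_neq0 => /ltnW le_fi.
  by rewrite nth_default ?scale0r.
case: (ex_maxnP (ex_intro (fun i => f`_i *: g != 0) k fkg_neq0) ub_f) => m fmg_neq0 max_m.
have fpg0 p : (m < p)%N -> f`_p *: g = 0.
  by move=> lt_mp; apply/eqP/negPn/negP => /max_m; rewrite leqNgt lt_mp.
have fm_lead0 : f`_m * lead_coef g = 0 by rewrite -coefM_lead // fg0 coef0.
have [|c c_neq0 cf0] := IHn _ (leq_trans (size_scale_lt g_neq0 fm_lead0) le_gn) fmg_neq0.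
  by rewrite -scalerAr fg0 scaler0.
by exists c.
Qed.

End Polynomials.

Theorem mainTheorem14 (R : comNzRingType) :
  PropertyD R <-> PropertyD {poly R}.
Proof.
split=> D x; (split; last exact: regular_not_nilpotent) => not_nil.
  move=> g fg0; have [// | g_neq0] := eqVneq g 0.
  have [c c_neq0 cf0] := mccoy g_neq0 fg0.
  case: not_nil; apply: nilpotent_poly => k.
  exact: PropertyD_zero_divisor_nilpotent D c_neq0 (cf0 k).
apply: regular_polyC; apply/D => /nilpotent_polyC; exact: not_nil.
Qed.
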